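(* Let $D\subset\Phi^+$ be an orthogonal subset satisfying Assumption (A). (a) Let $\beta\in D\cap\mathcal C_j$, $\alpha\in S^+(\beta)$, and suppose $\beta-\alpha\in\mathcal M_j$. Then every $\beta'\in D$ of the form $\beta'=\alpha+\delta$ with $\delta\in\Phi^+$ lies in $\mathcal C_j$. (b) Suppose $|D\cap\mathcal C_j|=2$, say $D\cap\mathcal C_j=\{\beta,\beta'\}$, let $\gamma\in\mathcal M_j$ with $\mathrm{col}(\gamma)\ne\pm\mathrm{row}(\beta)$. Then every root of $D$ of the form $\gamma+\delta$ with $\delta\in\mathcal P$ lies in $\mathcal C_j$.
   Context: Let $\Phi$ be a root system of type $B_n$, $C_n$ or $D_n$ in $\mathbb R^n$ with standard basis $\varepsilon_1,\dots,\varepsilon_n$ and positive roots $\Phi^+=\{\varepsilon_i\pm\varepsilon_j:1\le i<j\le n\}\cup\Phi_1^+$, where $\Phi_1^+=\emptyset$ for $D_n$, $\{\varepsilon_i\}$ for $B_n$, $\{2\varepsilon_i\}$ for $C_n$. $D\subset\Phi^+$ is orthogonal if its roots are pairwise orthogonal. Assumption (A): if $\Phi=B_n$, $D$ contains at most one root of the form $\varepsilon_i$; if $\Phi=C_n$, $D$ does not contain both $\varepsilon_i-\varepsilon_j$ and $\varepsilon_i+\varepsilon_j$ for any $i<j$. $\mathrm{col}(\varepsilon_i\pm\varepsilon_j)=\mathrm{col}(\varepsilon_i)=\mathrm{col}(2\varepsilon_i)=i$; $\mathrm{row}(\varepsilon_i\pm\varepsilon_j)=\mp j$, $\mathrm{row}(\varepsilon_i)=0$,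 $\mathrm{row}(2\varepsilon_i)=-i$. $\mathcal R_i=\{\alpha\in\Phi^+:\mathrm{row}(\alpha)=i\}$, $\mathcal C_j=\{\alpha\in\Phi^+:\mathrm{col}(\alpha)=j\}$. For $\beta\in\Phi^+$, $S(\beta)=\{\alpha\in\Phi^+:\beta-\alpha\in\Phi^+\}$; $S^+(\beta)=\{\varepsilon_i+\varepsilon_l:i<l\le n\}$ if $\Phi=C_n$ and $\beta=2\varepsilon_i$, and $S^+(\beta)=S(\beta)\cap\mathcal C_{\mathrm{col}(\beta)}$ otherwise; $S^-(\beta)=S(\beta)\setminus S^+(\beta)$. Let $j_1<\dots<j_t$ be the indices of columns containing roots of $D$; recursively $\mathcal M_{j_i}=\{\gamma\in S^-(\beta):\beta\in D\cap\mathcal C_{j_i},\ \gamma\notin\bigcup_{l<i}\mathcal M_{j_l},\ \beta-\gamma\notin\bigcup_{l<i}\mathcal M_{j_l}\}$, and $\mathcal M_j=\emptyset$ for columns $j$ containing no root of $D$; $\mathcal M=\bigcup_i\mathcal M_{j_i}$, $\mathcal P=\Phi^+\setminus\mathcal M$. *)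

From mathcomp Require Import all_boot all_order all_algebra.
Set Implicit Arguments. Unset Strict Implicit. Unset Printing Implicit Defensive.
Import GRing.Theory Num.Theory.
Local Open Scope ring_scope.

Inductive rtype := TB | TC | TD.

(* Candidate positive roots, indices are 1-based (eps_1,...,eps_n). *)
Inductive proot :=
| Rm of nat & nat   (* Rm i j = eps_i - eps_j *)
| Rp of nat & nat   (* Rp i j = eps_i + eps_j *)
| Rs of nat         (* Rs i   = eps_i   (type B) *)
| Rl of nat.        (* Rl i   = 2 eps_i (type C) *)

Definition isPos (t : rtype) (n : nat) (r : proot) : Prop :=
  match r with
  | Rm i j | Rp i j => (1 <= i)%N /\ (i < j)%N /\ (j <= n)%N
  | Rs i => t = TB /\ (1 <= i <= n)%N
  | Rl i => t = TC /\ (1 <= i <= n)%N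
  end.

Definition vec (r : proot) (k : nat) : int :=
  match r with
  | Rm i j => (k == i)%:Z - (k == j)%:Z
  | Rp i j => (k == i)%:Z + (k == j)%:Z
  | Rs i => (k == i)%:Z
  | Rl i => 2 * (k == i)%:Z
  end.

Definition dot (n : nat) (a b : proot) : int :=
  \sum_(1 <= k < n.+1) vec a k * vec b k.

Definition rcol (r : proot) : nat :=
  match r with Rm i _ | Rp i _ | Rs i | Rl i => i end.

Definition rrow (r : proot) : int :=
  match r with
  | Rm _ j => j%:Z
  | Rp _ j => - j%:Z
  | Rs _ => 0
  | Rl i => - i%:Z
  end.

Definition is_diff (r a b : proot) : Prop := forall k, vec r k = vec a k - vec b k.
Definition is_sum (r a b : proot) : Prop := forall k, vec r k = vec a k + vec b k.

Definition S_ (t : rtype) (n : nat) (beta a : proot) : Prop :=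
  isPos t n a /\ exists r, isPos t n r /\ is_diff r beta a.

Definition Splus (t : rtype) (n : nat) (beta a : proot) : Prop :=
  match t, beta with
  | TC, Rl i => exists l, (i < l <= n)%N /\ a = Rp i l
  | _, _ => S_ t n beta a /\ rcol a = rcol beta
  end.

Definition Sminus (t : rtype) (n : nat) (beta a : proot) : Prop :=
  S_ t n beta a /\ ~ Splus t n beta a.

Definition orthogonal_set (t : rtype) (n : nat) (D : proot -> Prop) : Prop :=
  (forall r, D r -> isPos t n r) /\
  (forall a b, D a -> D b -> a <> b -> dot n a b = 0).

Definition assumptionA (t : rtype) (D : proot -> Prop) : Prop :=
  (t = TB -> forall i k, D (Rs i) -> D (Rs k) -> i = k) /\
  (t = TC -> forall i j, (i < j)%N -> ~ (D (Rm i j) /\ D (Rp i j))).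

(* One step of the recursive construction of M_j, given the union U of
   the previously constructed M_l (l < j). *)
Definition Mstep (t : rtype) (n : nat) (D : proot -> Prop)
    (U : proot -> Prop) (j : nat) (g : proot) : Prop :=
  exists beta, D beta /\ rcol beta = j /\ Sminus t n beta g /\ ~ U g /\
    (forall r, isPos t n r -> is_diff r beta g -> ~ U r).

(* Mlt k = union of the M_l for l < k. Columns with no proot of D
   contribute the empty set, so this agrees with the union over the
   earlier columns j_l containing roots of D. *)
Fixpoint Mlt (t : rtype) (n : nat) (D : proot -> Prop) (k : nat) : proot -> Prop :=
  match k with
  | 0 => fun _ => False
  | k'.+1 => fun g => Mlt t n D k' g \/ Mstep t n D (Mlt t n D k') k' g
  end.

Definition Mcol (t : rtype) (n : nat) (D : proot -> Prop) (j : nat) (g : proot) : Prop :=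
  Mstep t n D (Mlt t n D j) j g.

Definition Mset (t : rtype) (n : nat) (D : proot -> Prop) (g : proot) : Prop :=
  exists j, Mcol t n D j g.
Definition Pset (t : rtype) (n : nat) (D : proot -> Prop) (g : proot) : Prop :=
  isPos t n g /\ ~ Mset t n D g.

(* Each part of the lemma is then proved by
   contradiction: assuming the root of D lies outside column j, the dichotomy
   produces a root of D in an earlier column whose shape, determined by the
   shape analyses, contradicts orthogonality or Assumption (A). *)

From Stdlib Require Import ZArith Lia Classical.
From mathcomp Require Import all_boot all_order all_algebra.
Import GRing.Theory.

Set Implicit Arguments.
Unset Strict Implicit.

Local Open Scope Z_scope.

(** The embedding of [int] into [Z]; it is additive and injective, so
    identities between coordinate vectors can be checked in [Z] by [lia]. *)
Definition zi (x : int) : Z :=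
  match x with Posz m => Z.of_nat m | Negz m => - Z.of_nat m - 1 end.

Lemma zi_add x y : zi (x + y)%R = zi x + zi y.
Proof.
case: x => a; case: y => b; rewrite /GRing.add /= /intZmod.addz.
all: try (case: ltnP => H; move/leP: H => H).
all: rewrite /zi -?plusE -?minusE; lia.
Qed.

Lemma zi_opp x : zi (- x)%R = - zi x.
Proof. by case: x => [[|a]|a]; rewrite /GRing.opp /= /intZmod.oppz /zi; lia. Qed.

Lemma zi_sub x y : zi (x - y)%R = zi x - zi y.
Proof. by rewrite zi_add zi_opp; lia. Qed.

Lemma zi_inj x y : zi x = zi y -> x = y.
Proof. by case: x => a; case: y => b /= H; f_equal; lia. Qed.

(** Coordinates of a root in [Z], written with [Nat.eqb] so that the case
    analysis on coincidences of indices is a plain [Nat.eqb_spec] split. *)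
Definition b2z (b : bool) : Z := if b then 1 else 0.

Definition zcoord (r : proot) (k : nat) : Z :=
  match r with
  | Rm i j => b2z (Nat.eqb k i) - b2z (Nat.eqb k j)
  | Rp i j => b2z (Nat.eqb k i) + b2z (Nat.eqb k j)
  | Rs i => b2z (Nat.eqb k i)
  | Rl i => 2 * b2z (Nat.eqb k i)
  end.

Lemma zi_vec r k : zi (vec r k) = zcoord r k.
Proof.
have eqnb (i : nat) : (k == i) = Nat.eqb k i by case: eqP; case: Nat.eqb_spec.
have zi_b (b : bool) : zi b%:Z = b2z b by case: b.
case: r => [i j|i j|i|i]; rewrite /vec /zcoord.
- by rewrite zi_sub !zi_b !eqnb.
- by rewrite zi_add !zi_b !eqnb.
- by rewrite !zi_b !eqnb.
- by rewrite -eqnb; case: (k == i).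
Qed.

Lemma is_diff_coord r a b :
  is_diff r a b <-> forall k, zcoord r k = zcoord a k - zcoord b k.
Proof.
split=> E k; first by rewrite -!zi_vec E zi_sub.
by apply: zi_inj; rewrite zi_sub !zi_vec E.
Qed.

Lemma is_sum_coord r a b :
  is_sum r a b <-> forall k, zcoord r k = zcoord a k + zcoord b k.
Proof.
split=> E k; first by rewrite -!zi_vec E zi_add.
by apply: zi_inj; rewrite zi_add !zi_vec E.
Qed.

(** Positive roots, with the bounds stated in Peano arithmetic for [lia]. *)
Definition isPosN (t : rtype) (n : nat) (r : proot) : Prop :=
  match r with
  | Rm i j | Rp i j => (1 <= i /\ i < j /\ j <= n)%coq_nat
  | Rs i => t = TB /\ (1 <= i /\ i <= n)%coq_nat
  | Rl i => t = TC /\ (1 <= i /\ i <= n)%coq_nat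
  end.

Lemma isPosNE t n r : isPos t n r <-> isPosN t n r.
Proof.
case: r => [i j|i j|i|i] /=; split.
all: try by case=> /leP ? [/leP ? /leP ?].
all: try by case=> ? /andP [/leP ? /leP ?].
all: by case=> ? [/leP ? /leP ?]; split=> //; apply/andP.
Qed.

(** The linear form [f |-> a . f] of a root [a] (for [f] a coordinate
    function); [dot n a b] is its value at the coordinates of [b]. *)
Definition pairing (a : proot) (f : nat -> Z) : Z :=
  match a with
  | Rm i j => f i - f j | Rp i j => f i + f j | Rs i => f i | Rl i => 2 * f i
  end.

Lemma sum_pick n i (f : nat -> int) : (1 <= i <= n)%N ->
  (\sum_(1 <= k < n.+1) (k == i)%:Z * f k)%R = f i.
Proof.
move=> Hi; rewrite (bigD1_seq i) /=; last by rewrite iota_uniq.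
  by rewrite eqxx mul1r big1 ?addr0 // => k /negPf ->; rewrite mul0r.
by rewrite mem_iota; case/andP: Hi => H1 H2; rewrite H1 /= subnKC // ltnS.
Qed.

Lemma dot_pairing t n a b : isPos t n a -> zi (dot n a b) = pairing a (zcoord b).
Proof.
rewrite /dot; case: a => [i j|i j|i|i] /=.
- case=> H1 [H2 H3].
  have Hi : (1 <= i <= n)%N by rewrite H1 (leq_trans (ltnW H2) H3).
  have Hj : (1 <= j <= n)%N by rewrite H3 andbT (leq_trans H1 (ltnW H2)).
  under eq_bigr do rewrite mulrBl.
  by rewrite sumrB !sum_pick // zi_sub !zi_vec.
- case=> H1 [H2 H3].
  have Hi : (1 <= i <= n)%N by rewrite H1 (leq_trans (ltnW H2) H3).
  have Hj : (1 <= j <= n)%N by rewrite H3 andbT (leq_trans H1 (ltnW H2)).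
  under eq_bigr do rewrite mulrDl.
  by rewrite big_split /= !sum_pick // zi_add !zi_vec.
- by case=> _ Hi; rewrite sum_pick // zi_vec.
- case=> _ Hi; under eq_bigr do rewrite -mulrA.
  rewrite -mulr_sumr sum_pick // -[2%R]/(1 + 1)%R mulrDl mul1r zi_add zi_vec.
  by change (zcoord b i + zcoord b i = 2 * zcoord b i); lia.
Qed.

Lemma orth_pairing t n D a b : orthogonal_set t n D -> D a -> D b -> a <> b ->
  pairing a (zcoord b) = 0.
Proof.
by case=> Hpos Horth Da Db Hab; rewrite -(dot_pairing b (Hpos _ Da)) Horth.
Qed.

Definition snd_idx (r : proot) : nat :=
  match r with Rm _ j | Rp _ j => j | Rs i | Rl i => i end.

(** Tactics for the finite case analyses on the shapes of roots: instantiate a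
    coordinate identity at every index carried by the roots involved, split on
    all coincidences of indices, and close each case by [lia]. *)
Definition indices (r : proot) : list nat :=
  match r with Rm i j | Rp i j => i :: j :: nil | Rs i | Rl i => i :: nil end.

Fixpoint all_at (P : nat -> Prop) (l : list nat) : Prop :=
  match l with nil => True | x :: l' => P x /\ all_at P l' end.

Lemma all_atW (P : nat -> Prop) l : (forall k, P k) -> all_at P l.
Proof. by move=> H; elim: l => //= x l IH; split. Qed.

Ltac specialize_at E l := let H := fresh "S" in have H := @all_atW _ l E; clear E.

Ltac unfold_shapes :=
  cbn [all_at indices cat app zcoord b2z isPosN rcol snd_idx pairing] in * |- * ;
  repeat match goal with H : _ /\ _ |- _ => destruct H end;
  repeat match goal with H : ?x = ?y |- _ => is_var x; is_var y; subst x end;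
  repeat match goal with H : ?x = ?c |- _ => is_var x;
    lazymatch type of x with rtype => subst x end end.

Ltac split_eqb :=
  match goal with
  | H : context [Nat.eqb ?a ?b] |- _ => let E := fresh "Heq" in
      destruct (Nat.eqb_spec a b) as [E|?]; [revert E; first [intros -> | intros ?] | ]
  | |- context [Nat.eqb ?a ?b] => let E := fresh "Heq" in
      destruct (Nat.eqb_spec a b) as [E|?]; [revert E; first [intros -> | intros ?] | ]
  end.

Ltac close_case :=
  first [ lia | discriminate | (f_equal; lia)
        | match goal with H : ?a <> ?a |- _ => by case: H end
        | (split; close_case) | (left; close_case) | (right; close_case) ].

Ltac shape_cases :=
  repeat (first [ close_case | split_eqb | progress (cbn [b2z] in * |- * )]).

Ltac destruct_root r := destruct r as [? ?|? ?|?|?].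

Lemma zcoord_col t n r : isPosN t n r ->
  0 < zcoord r (rcol r) /\ forall k, (k < rcol r)%coq_nat -> zcoord r k = 0.
Proof. by destruct_root r => H; split; try move=> k Hk; unfold_shapes; shape_cases. Qed.

Lemma zcoord_inj t n r r' : isPosN t n r -> isPosN t n r' ->
  (forall k, zcoord r k = zcoord r' k) -> r = r'.
Proof.
move=> Hr Hr' E; specialize_at E (indices r ++ indices r').
by destruct_root r; destruct_root r'; unfold_shapes; shape_cases.
Qed.

Lemma col_sum t n r a b : isPosN t n r -> isPosN t n a -> isPosN t n b ->
  (forall k, zcoord r k = zcoord a k + zcoord b k) ->
  rcol r = Nat.min (rcol a) (rcol b).
Proof.
move=> /zcoord_col [pr zr] /zcoord_col [pa za] /zcoord_col [pb zb] E.
move: (rcol r) (rcol a) (rcol b) pr pa pb zr za zb => cr ca cb pr pa pb zr za zb.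
have := E cr; have := E ca; have := E cb.
have := za cr; have := za cb; have := zb cr; have := zb ca; have := zr ca; have := zr cb.
by case: (Nat.lt_total ca cb) => [h|[h|h]]; try subst ca; lia.
Qed.

Lemma diff_unique t n b a r r' : isPosN t n r -> isPosN t n r' ->
  is_diff r b a -> is_diff r' b a -> r = r'.
Proof.
move=> Hr Hr' /is_diff_coord E /is_diff_coord E'.
by apply: (zcoord_inj Hr Hr') => k; rewrite E E'.
Qed.

Lemma same_column_orthogonal t n b b' : isPosN t n b -> isPosN t n b' ->
  rcol b = rcol b' -> pairing b (zcoord b') = 0 ->
  (b = Rm (rcol b) (snd_idx b) /\ b' = Rp (rcol b) (snd_idx b)) \/
  (b = Rp (rcol b) (snd_idx b) /\ b' = Rm (rcol b) (snd_idx b)).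
Proof.
move=> Hb Hb' Ec Ed.
by destruct_root b; destruct_root b'; unfold_shapes; shape_cases.
Qed.

Lemma witness_unique t n b a g b0 r0 : isPosN t n b -> isPosN t n a -> isPosN t n g ->
  isPosN t n b0 -> isPosN t n r0 ->
  rcol a = rcol b -> (forall k, zcoord g k = zcoord b k - zcoord a k) ->
  rcol b0 = rcol b -> (forall k, zcoord r0 k = zcoord b0 k - zcoord g k) ->
  pairing b0 (zcoord b) = 0 -> b0 = b.
Proof.
move=> Hb Ha Hg Hb0 Hr0 Ec E1 Ec0 E2 Ed.
specialize_at E1 (indices g ++ indices b ++ indices a).
specialize_at E2 (indices r0 ++ indices b0 ++ indices g).
destruct_root b; destruct_root a; destruct_root g; unfold_shapes; shape_cases;
  destruct_root b0; destruct_root r0; unfold_shapes; shape_cases.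
Qed.

Lemma sum_below_column t n a d b' j (f : nat -> Z) :
  isPosN t n a -> isPosN t n d -> isPosN t n b' ->
  rcol a = j -> (rcol d < j)%coq_nat ->
  (forall k, zcoord b' k = zcoord a k + zcoord d k) ->
  0 < f j -> f (rcol d) = 0 -> pairing b' f = 0 -> d = Rm (rcol d) j.
Proof.
move=> Ha Hd Hb E0 Hl E Hf1 Hf2 Hf3.
specialize_at E (indices a ++ indices d ++ indices b').
by destruct_root a; destruct_root d; destruct_root b'; unfold_shapes; shape_cases.
Qed.

Lemma lower_minus_shape t n b r l j : isPosN t n b -> isPosN t n r ->
  (rcol b < l)%coq_nat -> (l < j)%coq_nat ->
  (forall k, zcoord r k = zcoord b k - zcoord (Rm l j) k) ->
  b = Rm (rcol b) j \/ b = Rp (rcol b) l.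
Proof.
move=> Hb Hr Hl Hlj E; specialize_at E (indices b ++ indices r ++ indices (Rm l j)).
by destruct_root b; destruct_root r; unfold_shapes; shape_cases.
Qed.

Lemma minus_difference_shape t n j k g r : isPosN t n g -> isPosN t n r ->
  (j < k)%coq_nat -> (forall i, zcoord r i = zcoord (Rm j k) i - zcoord g i) ->
  rcol g <> j -> g = Rm (rcol g) k /\ (j < rcol g)%coq_nat /\ (rcol g < k)%coq_nat.
Proof.
move=> Hg Hr Hjk E Hc; specialize_at E (indices g ++ indices r ++ indices (Rm j k)).
by destruct_root g; destruct_root r; unfold_shapes; shape_cases.
Qed.

Lemma plus_difference_shape t n j k g r : isPosN t n g -> isPosN t n r ->
  (j < k)%coq_nat -> (forall i, zcoord r i = zcoord (Rp j k) i - zcoord g i) ->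
  rcol g <> j -> rcol g <> k ->
  g = Rp (rcol g) k /\ (j < rcol g)%coq_nat /\ (rcol g < k)%coq_nat.
Proof.
move=> Hg Hr Hjk E Hc Hc'; specialize_at E (indices g ++ indices r ++ indices (Rp j k)).
by destruct_root g; destruct_root r; unfold_shapes; shape_cases.
Qed.

Lemma minus_sum_shape t n j x k rho d : t <> TC ->
  (j < x)%coq_nat -> (x < k)%coq_nat -> isPosN t n rho -> isPosN t n d ->
  (forall i, zcoord rho i = zcoord (Rm x k) i + zcoord d i) ->
  zcoord rho j = 0 -> zcoord rho k = 0 -> (j < rcol d)%coq_nat ->
  (d = Rp k (snd_idx d) /\ rho = Rp x (snd_idx d))
  \/ (d = Rp (rcol d) k /\ (rho = Rp x (rcol d) \/ rho = Rp (rcol d) x))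
  \/ (d = Rm k (snd_idx d) /\ rho = Rm x (snd_idx d))
  \/ (d = Rs k /\ rho = Rs x).
Proof.
move=> Ht Hjx Hxk Hr Hd E Ej Ek Hc.
specialize_at E (indices rho ++ indices d ++ indices (Rm x k)).
by destruct_root rho; destruct_root d; unfold_shapes; shape_cases.
Qed.

Lemma plus_sum_shape t n j x k rho d : t <> TC ->
  (j < x)%coq_nat -> (x < k)%coq_nat -> isPosN t n rho -> isPosN t n d ->
  (forall i, zcoord rho i = zcoord (Rp x k) i + zcoord d i) ->
  zcoord rho j = 0 -> zcoord rho k = 0 -> (j < rcol d)%coq_nat ->
  d = Rm (rcol d) k /\ (rho = Rp x (rcol d) \/ rho = Rp (rcol d) x).
Proof.
move=> Ht Hjx Hxk Hr Hd E Ej Ek Hc.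
specialize_at E (indices rho ++ indices d ++ indices (Rp x k)).
by destruct_root rho; destruct_root d; unfold_shapes; shape_cases.
Qed.

Lemma lower_excluded_minus t n j k x y rho b r : isPosN t n b -> isPosN t n r ->
  (forall i, zcoord r i = zcoord b i - zcoord (Rm j y) i) -> (rcol b < j)%coq_nat ->
  (j < k)%coq_nat -> (j < x)%coq_nat -> (j < y)%coq_nat ->
  (rho = Rp x y \/ rho = Rp y x) ->
  pairing b (zcoord rho) = 0 -> pairing b (zcoord (Rp j k)) = 0 -> False.
Proof.
move=> Hb Hr E Hc Hjk Hjx Hjy Hrho D1 D2.
specialize_at E (indices b ++ indices r ++ indices (Rm j y)).
by case: Hrho => ->{rho} in D1 *; destruct_root b; destruct_root r;
  unfold_shapes; shape_cases.
Qed.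

Lemma lower_excluded_plus t n j k x y b r : isPosN t n b -> isPosN t n r ->
  (forall i, zcoord r i = zcoord b i - zcoord (Rp j y) i) -> (rcol b < j)%coq_nat ->
  (j < k)%coq_nat -> (j < x)%coq_nat -> (x < y)%coq_nat ->
  pairing b (zcoord (Rm x y)) = 0 -> pairing b (zcoord (Rp j k)) = 0 -> False.
Proof.
move=> Hb Hr E Hc Hjk Hjx Hxy D1 D2.
specialize_at E (indices b ++ indices r ++ indices (Rp j y)).
by destruct_root b; destruct_root r; unfold_shapes; shape_cases.
Qed.

Lemma lower_excluded_short t n j k x b r : isPosN t n b -> isPosN t n r ->
  (forall i, zcoord r i = zcoord b i - zcoord (Rs j) i) -> (rcol b < j)%coq_nat ->
  (j < k)%coq_nat -> (j < x)%coq_nat ->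
  (match b with Rs i => i = x | _ => True end) ->
  pairing b (zcoord (Rp j k)) = 0 -> False.
Proof.
move=> Hb Hr E Hc Hjk Hjx HA D2.
specialize_at E (indices b ++ indices r ++ indices (Rs j)).
by destruct_root b; destruct_root r; unfold_shapes; shape_cases.
Qed.

Section Construction.
Variables (t : rtype) (n : nat) (D : proot -> Prop).
Hypothesis hD : orthogonal_set t n D.

Lemma posD r : D r -> isPosN t n r.
Proof. by move=> /hD.1 /isPosNE. Qed.

Lemma orth_col a b : D a -> D b -> rcol a <> rcol b -> pairing a (zcoord b) = 0.
Proof. by move=> Da Db Hab; apply: (orth_pairing hD Da Db) => E; apply: Hab; rewrite E. Qed.

Lemma Mlt_le k k' g : (k <= k')%N -> Mlt t n D k g -> Mlt t n D k' g.
Proof.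
move=> /subnKC <-; elim: (k' - k)%N => [|d IH] H; first by rewrite addn0.
by rewrite addnS; left; apply: IH.
Qed.

Lemma Mlt_ex k g : Mlt t n D k g -> exists l, (l < k)%N /\ Mcol t n D l g.
Proof.
elim: k => [|k IH] //= [H|H]; last by exists k.
by case: (IH H) => l [Hl Hc]; exists l; split => //; apply: ltnW.
Qed.

Lemma Mlt_Mset k g : Mlt t n D k g -> Mset t n D g.
Proof. by case/Mlt_ex => l [_ H]; exists l. Qed.

Lemma Mlt_witness k w : Mlt t n D k w ->
  exists b r, D b /\ (rcol b < k)%coq_nat /\ isPosN t n r /\
    (forall i, zcoord r i = zcoord b i - zcoord w i).
Proof.
case/Mlt_ex => l [/ltP Hl [b [Db [Hcb [[[_ [r [Hr /is_diff_coord Er]]] _] _]]]]].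
by exists b, r; rewrite Hcb; split; [|split; [|split; [apply/isPosNE|]]].
Qed.

Lemma Splus_pos b a : isPos t n b -> Splus t n b a -> isPos t n a /\ rcol a = rcol b.
Proof.
case: t; case: b => [i j|i j|i|i] //=; try by move=> _ [[Ha _] Hc].
by move=> [_ /andP [H1 H2]] [l [/andP [H3 H4] ->]].
Qed.

(** The dichotomy driving the construction: if a root [b] of [D] is the sum
    [a + d] of positive roots with [a] outside its column, then either [a]
    is in [M] by stage [rcol b + 1], or [d] already is by stage [rcol b];
    otherwise [a] would have been put into [M_(rcol b)]. *)
Lemma sum_dichotomy b a d : D b -> isPos t n a -> isPos t n d -> is_sum b a d ->
  rcol a <> rcol b -> Mlt t n D (rcol b).+1 a \/ Mlt t n D (rcol b) d.
Proof.
move=> Db Ha Hd Hs Hcol.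
have Ed : is_diff d b a.
  by apply/is_diff_coord => k; move/is_sum_coord: Hs => /(_ k); lia.
have Hsm : Sminus t n b a.
  split; first by split => //; exists d.
  by move=> /(Splus_pos (hD.1 _ Db)) [_ E]; apply: Hcol.
case: (classic (Mlt t n D (rcol b) a)) => H1; first by left; left.
case: (classic (Mlt t n D (rcol b) d)) => H2; first by right.
left; right; exists b; do 4! (split => //).
move=> r' /isPosNE Hr' E'.
by rewrite -(diff_unique (proj1 (isPosNE _ _ _) Hd) Hr' Ed E').
Qed.

Lemma lower_witness b0 w d : D b0 -> isPos t n w -> isPos t n d ->
  (forall i, zcoord w i = zcoord b0 i - zcoord d i) ->
  rcol d <> rcol b0 -> ~ Mset t n D d ->
  exists b r, D b /\ (rcol b < rcol b0)%coq_nat /\ isPosN t n r /\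
    (forall i, zcoord r i = zcoord b i - zcoord w i).
Proof.
move=> Db Hw Hd E Hcd HM.
have Hs : is_sum b0 d w by apply/is_sum_coord => i; have := E i; lia.
case: (sum_dichotomy Db Hd Hw Hs Hcd) => [/Mlt_Mset //|]; exact: Mlt_witness.
Qed.

Lemma Splus_not_C b g : t <> TC -> S_ t n b g -> rcol g = rcol b -> Splus t n b g.
Proof. by case: t => // _; case: b. Qed.

(** If [g = b - a] was put into [M_j], where [b] is a root of [D] in column
    [j] and [a] lies in the same column, then it was put there through [b]
    itself; hence [a = b - g] is not in [M] before stage [j]. *)
Lemma Mcol_complement j b a g : D b -> rcol b = j -> isPos t n a -> rcol a = j ->
  is_diff g b a -> Mcol t n D j g -> ~ Mlt t n D j a.
Proof.
move=> Db Hcb Ha Hca Eg [b0 [Db0 [Hc0 [[[Hg [r0 [Hr0 Er0]]] _] [_ Hw]]]]].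
have Eb0 : b0 = b.
  case: (classic (b0 = b)) => // Hne.
  move/isPosNE in Ha; move/isPosNE in Hg; move/isPosNE in Hr0.
  apply: (witness_unique (posD Db) Ha Hg (posD Db0) Hr0) => //.
  - by rewrite Hca Hcb.
  - exact/is_diff_coord.
  - by rewrite Hc0 Hcb.
  - exact/is_diff_coord.
  - exact: orth_pairing hD Db0 Db Hne.
apply: Hw Ha _; rewrite Eb0.
by apply/is_diff_coord => k; move/is_diff_coord: Eg => /(_ k); lia.
Qed.

(** The final step of (a): a root of [D] in a column [< c] from which
    [e_c - e_j] can be subtracted is orthogonal neither to the root of [D]
    in column [j] nor to the one in column [c]. *)
Lemma lower_minus_excluded b b' b'' r c j : D b -> D b' -> D b'' ->
  rcol b = j -> rcol b' = c -> (rcol b'' < c)%coq_nat -> (c < j)%coq_nat ->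
  isPosN t n r -> (forall i, zcoord r i = zcoord b'' i - zcoord (Rm c j) i) -> False.
Proof.
move=> Db Db' Db'' Hb Hb' Hlt Hcj Hr E.
have [pb zb] := zcoord_col (posD Db); have [pb' zb'] := zcoord_col (posD Db').
have O := orth_col Db''; subst j c.
case: (lower_minus_shape (posD Db'') Hr Hlt Hcj E) => Eb''.
- by have := O _ Db; rewrite Eb'' /=; have := zb (rcol b''); lia.
- by have := O _ Db'; rewrite Eb'' /=; have := zb' (rcol b''); lia.
Qed.

Lemma part_a j b a g : D b -> rcol b = j -> Splus t n b a -> is_diff g b a ->
  Mcol t n D j g -> forall b' d, D b' -> isPos t n d -> is_sum b' a d -> rcol b' = j.
Proof.
move=> Db Hcb Hsp Eg Mg b' d Db' Hd Hs.
have [Ha Hca] := Splus_pos (hD.1 _ Db) Hsp.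
case: (Nat.eq_dec (rcol b') j) => // Hne; exfalso.
have HaN : isPosN t n a by apply/isPosNE.
have HdN : isPosN t n d by apply/isPosNE.
have Ecol := col_sum (posD Db') HaN HdN (proj1 (is_sum_coord _ _ _) Hs).
have Hdj : (rcol d < j)%coq_nat by lia.
have Ed : d = Rm (rcol d) j.
  have [pb zb] := zcoord_col (posD Db).
  apply: (sum_below_column (f := zcoord b) HaN HdN (posD Db') _ Hdj
           (proj1 (is_sum_coord _ _ _) Hs)).
  - by rewrite Hca.
  - by rewrite -Hcb.
  - by apply: zb; rewrite Hcb.
  - by apply: orth_col => //; rewrite Hcb.
(* [a] is not in [M] before stage [j], so [d] is in [M] before stage [c] *)
have NA := Mcol_complement Db Hcb Ha (etrans Hca Hcb) Eg Mg.
have Hab' : rcol a <> rcol b' by lia.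
case: (sum_dichotomy Db' Ha Hd Hs Hab') => [HM|HM].
  by apply: NA; apply: Mlt_le HM; apply/leP; lia.
have [b'' [r'' [Db'' [Hc'' [Hr'' E'']]]]] := Mlt_witness HM.
rewrite Ed in E''.
apply: (lower_minus_excluded Db Db' Db'' Hcb _ _ Hdj Hr'' E''); lia.
Qed.

Lemma column_pair j b b' : D b -> D b' -> b <> b' -> rcol b = j -> rcol b' = j ->
  (forall r, D r -> rcol r = j -> r = b \/ r = b') ->
  exists k, [/\ (j < k)%coq_nat, D (Rm j k), D (Rp j k),
    (forall r, D r -> rcol r = j -> r = Rm j k \/ r = Rp j k) &
    rrow b = Posz k \/ rrow b = (- Posz k)%R].
Proof.
move=> Db Db' Hne Hc Hc' Honly.
have := same_column_orthogonal (posD Db) (posD Db') (etrans Hc (esym Hc'))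
  (orth_pairing hD Db Db' Hne).
rewrite Hc; move: (snd_idx b) => k Hshape.
have [Dm Dp] : D (Rm j k) /\ D (Rp j k).
  by case: Hshape Db Db' => [[-> ->]|[-> ->]].
exists k; split => //.
- by have /= := posD Dm; lia.
- move=> r Dr /(Honly r Dr).
  by case: Hshape => [[-> ->]|[-> ->]] [->|->]; auto.
- by case: Hshape => [[-> _]|[-> _]]; [left|right].
Qed.

Lemma Mcol_pair_shape j k g : t <> TC -> (j < k)%coq_nat ->
  (forall r, D r -> rcol r = j -> r = Rm j k \/ r = Rp j k) ->
  Mcol t n D j g -> rcol g <> k ->
  exists x, [/\ (j < x)%coq_nat, (x < k)%coq_nat & g = Rm x k \/ g = Rp x k].
Proof.
move=> Ht Hjk Honly [b0 [Db0 [Hc0 [[[Hg [r0 [Hr0 Er0]]] Nsp] _]]]] Hgk.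
have Hgj : rcol g <> j.
  by move=> E; apply: Nsp; apply: Splus_not_C => //; [split => //; exists r0 | rewrite Hc0].
move/isPosNE in Hg; move/isPosNE in Hr0; move/is_diff_coord in Er0.
case: (Honly b0 Db0 Hc0) => Eb0; rewrite Eb0 in Er0.
- have [Eg [Hjx Hxk]] := minus_difference_shape Hg Hr0 Hjk Er0 Hgj.
  by exists (rcol g); split => //; left.
- have [Eg [Hjx Hxk]] := plus_difference_shape Hg Hr0 Hjk Er0 Hgj Hgk.
  by exists (rcol g); split => //; right.
Qed.

Lemma partner_witness j k rho d b0' w : D (Rp j k) -> D rho -> (j < rcol rho)%coq_nat ->
  Pset t n D d -> rcol d <> j -> D b0' -> rcol b0' = j -> isPosN t n w ->
  (forall i, zcoord w i = zcoord b0' i - zcoord d i) ->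
  exists b r, [/\ D b, isPosN t n r, (rcol b < j)%coq_nat,
    forall i, zcoord r i = zcoord b i - zcoord w i &
    pairing b (zcoord rho) = 0 /\ pairing b (zcoord (Rp j k)) = 0].
Proof.
move=> Dp Drho Hrho [Hd NMd] Hdj Db0 Hc0 Hw Ew.
have [|b [r [Db [Hcb [Hr Er]]]]] := lower_witness Db0 (proj2 (isPosNE _ _ _) Hw) Hd Ew _ NMd.
  by rewrite Hc0.
rewrite Hc0 in Hcb; exists b, r; split => //; split; apply: orth_col => //=; lia.
Qed.

Ltac explicit_root :=
  first [ move=> i; cbn [zcoord]; shape_cases; fail
        | cbn [isPosN] in * |- *; intuition lia ].

(** The case [rcol d > j] of (b): by the shape analysis of [rho = g + d],
    the root [b0'] of column [j] other than the one through which [g]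
    entered [M_j] has [w = b0' - d] a positive root, and the root of [D]
    that [w] comes from is excluded by orthogonality or by Assumption (A). *)
Lemma upper_sum_excluded (hA : assumptionA t D) j k x g rho d : t <> TC ->
  D (Rm j k) -> D (Rp j k) -> (j < x)%coq_nat -> (x < k)%coq_nat ->
  g = Rm x k \/ g = Rp x k -> D rho -> Pset t n D d -> is_sum rho g d ->
  (j < rcol rho)%coq_nat -> (j < rcol d)%coq_nat -> False.
Proof.
move=> Ht Dm Dp Hjx Hxk Hg Drho Pd /is_sum_coord Hs Hjr Hjd.
have Hrho := posD Drho; have HmN := posD Dm.
have HdN : isPosN t n d by apply/isPosNE; case: Pd.
have [Ej Ek] : zcoord rho j = 0 /\ zcoord rho k = 0.
  by have := orth_col Dm Drho; have := orth_col Dp Drho; cbn [rcol pairing]; lia.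
have W := partner_witness Dp Drho Hjr Pd ltac:(lia).
case: Hg => Eg; subst g.
- have := minus_sum_shape Ht Hjx Hxk Hrho HdN Hs Ej Ek Hjd.
  move: (snd_idx d) (rcol d) Hjd HdN => y y' Hjd HdN.
  case=> [[Ed Er]|[[Ed Er]|[[Ed Er]|[Ed Er]]]]; subst d.
  + (* [d = e_k + e_y], [rho = e_x + e_y], [w = (e_j + e_k) - d = e_j - e_y] *)
    have [b [r [Db Hr Hcb Er' [O1 O2]]]] :=
      W _ (Rm j y) Dp erefl ltac:(explicit_root) ltac:(explicit_root).
    apply: (lower_excluded_minus (posD Db) Hr Er' Hcb _ Hjx _ (or_introl Er) O1 O2);
      cbn [isPosN] in *; lia.
  + (* [d = e_y' + e_k], [rho = e_x + e_y'] in either order, [w = e_j - e_y'] *)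
    have [b [r [Db Hr Hcb Er' [O1 O2]]]] :=
      W _ (Rm j y') Dp erefl ltac:(explicit_root) ltac:(explicit_root).
    apply: (lower_excluded_minus (posD Db) Hr Er' Hcb _ Hjx Hjd Er O1 O2); lia.
  + (* [d = e_k - e_y], [rho = e_x - e_y], [w = e_j + e_y] *)
    subst rho; have [b [r [Db Hr Hcb Er' [O1 O2]]]] :=
      W _ (Rp j y) Dp erefl ltac:(explicit_root) ltac:(explicit_root).
    apply: (lower_excluded_plus (posD Db) Hr Er' Hcb _ Hjx _ O1 O2);
      cbn [isPosN] in *; lia.
  + (* [d = e_k], [rho = e_x], [w = e_j]; Assumption (A) is needed here *)
    subst rho; have [b [r [Db Hr Hcb Er' [_ O2]]]] :=
      W _ (Rs j) Dp erefl ltac:(explicit_root) ltac:(explicit_root).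
    apply: (lower_excluded_short (posD Db) Hr Er' Hcb _ Hjx _ O2); first lia.
    by move: Db; case: (b) => // i Di; apply: (hA.1 _ i x Di Drho); case: HdN.
- have [Ed Er] := plus_sum_shape Ht Hjx Hxk Hrho HdN Hs Ej Ek Hjd.
  move: (rcol d) Ed Er Hjd HdN => y Ed Er Hjd HdN; subst d.
  (* [d = e_y - e_k], [rho = e_x + e_y], [w = (e_j - e_k) - d = e_j - e_y] *)
  have [b [r [Db Hr Hcb Er' [O1 O2]]]] :=
    W _ (Rm j y) Dm erefl ltac:(explicit_root) ltac:(explicit_root).
  apply: (lower_excluded_minus (posD Db) Hr Er' Hcb _ Hjx Hjd Er O1 O2); lia.
Qed.

Lemma part_b (hA : assumptionA t D) j b b' g : D b -> D b' -> b <> b' ->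
  rcol b = j -> rcol b' = j -> (forall r, D r -> rcol r = j -> r = b \/ r = b') ->
  Mcol t n D j g -> Posz (rcol g) <> rrow b -> Posz (rcol g) <> (- rrow b)%R ->
  forall rho d, D rho -> Pset t n D d -> is_sum rho g d -> rcol rho = j.
Proof.
move=> Db Db' Hne Hc Hc' Honly Mg Hr1 Hr2 rho d Drho Pd Hs.
have [k [Hjk Dm Dp Honly' Hrow]] := column_pair Db Db' Hne Hc Hc' Honly.
have Ht : t <> TC by move=> Ht; apply: (hA.2 Ht j k); [apply/ltP | split].
have Hgk : rcol g <> k.
  by move=> E; case: Hrow => Hrow; [apply: Hr1 | apply: Hr2]; rewrite Hrow ?opprK E.
have [x [Hjx Hxk Hg]] := Mcol_pair_shape Ht Hjk Honly' Mg Hgk.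
have HgP : isPos t n g.
  by apply/isPosNE; have := posD Dm; case: Hg => ->; cbn; lia.
have [HdP NMd] := Pd.
have Ecol := col_sum (posD Drho) (proj1 (isPosNE _ _ _) HgP) (proj1 (isPosNE _ _ _) HdP)
  (proj1 (is_sum_coord _ _ _) Hs).
have Hcg : rcol g = x by case: Hg => ->.
case: (Nat.eq_dec (rcol rho) j) => // Hrj; exfalso.
case: (Nat.lt_total (rcol d) j) => [Hlt|[Heq|Hgt]]; last 2 first.
- lia.
- by apply: (upper_sum_excluded hA Ht Dm Dp Hjx Hxk Hg Drho Pd Hs _ Hgt); lia.
- (* [g] is in [M] by stage [rcol rho + 1 <= j], or [d] is in [M] *)
  have Hgr : rcol g <> rcol rho by lia.
  case: (sum_dichotomy Drho HgP HdP Hs Hgr) => [HM|/Mlt_Mset //].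
  by case: Mg => [? [_ [_ [_ [NU _]]]]]; apply: NU; apply: Mlt_le HM; apply/leP; lia.
Qed.

End Construction.

Local Close Scope Z_scope.
Local Open Scope ring_scope.

Theorem lemma2p7 (t : rtype) (n : nat) (D : proot -> Prop)
  (hD : orthogonal_set t n D) (hA : assumptionA t D) :
  (* (a) *)
  (forall (j : nat) (beta alpha : proot),
     D beta -> rcol beta = j -> Splus t n beta alpha ->
     (exists r, is_diff r beta alpha /\ Mcol t n D j r) ->
     forall beta' delta, D beta' -> isPos t n delta ->
       is_sum beta' alpha delta -> rcol beta' = j) /\
  (* (b) *)
  (forall (j : nat) (beta beta' gamma : proot),
     D beta -> D beta' -> beta <> beta' -> rcol beta = j -> rcol beta' = j ->
     (forall r, D r -> rcol r = j -> r = beta \/ r = beta') ->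
     Mcol t n D j gamma ->
     (rcol gamma)%:Z <> rrow beta -> (rcol gamma)%:Z <> - rrow beta ->
     forall rho delta, D rho -> Pset t n D delta ->
       is_sum rho gamma delta -> rcol rho = j).
Proof.
split.
- move=> j b a Db Hcb Hsp [g [Eg Mg]].
  exact (part_a hD Db Hcb Hsp Eg Mg).
- move=> j b b' g Db Db' Hne Hc Hc' Honly Mg Hrow Hrow'.
  exact (part_b hD hA Db Db' Hne Hc Hc' Honly Mg Hrow Hrow').
Qed.
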